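(* Let $R$ be a polynomial ring over a field $K$ (standard graded), and let $I$ and $J$ be graded ideals of $R$. Suppose $I$, $J$ and $I+J$ have $d$-linear resolutions. If all elements of a minimal homogeneous generating set $G(I\cap J)$ of $I\cap J$ have degree $d+1$, then $I\cap J$ has a $(d+1)$-linear resolution.
   Context: A graded ideal has a $d$-linear resolution if all its minimal generators have degree $d$ and in its graded minimal free resolution the $i$-th free module is generated in degree $d+i$ for all $i$ (equivalently $\mathrm{Tor}_i(K,I)_j=0$ for $j\neq i+d$). *)

From HB Require Import structures.
From mathcomp Require Import all_boot all_order all_algebra.
From mathcomp Require Import mpoly.
Set Implicit Arguments. Unset Strict Implicit. Unset Printing Implicit Defensive.
Import GRing.Theory.
Local Open Scope ring_scope.

Section Defs.
Variables (K : fieldType) (n : nat).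
Local Notation R := {mpoly K[n]}.

Definition is_ideal (I : R -> Prop) : Prop :=
  [/\ I 0, (forall p q, I p -> I q -> I (p + q)) & (forall r p, I p -> I (r * p))].

Definition is_graded_ideal (I : R -> Prop) : Prop :=
  is_ideal I /\ (forall p (e : nat), I p -> I (pihomog mdeg e p)).

Definition ideal_sum (I J : R -> Prop) : R -> Prop :=
  fun p => exists a b, [/\ I a, J b & p = a + b].

Definition ideal_cap (I J : R -> Prop) : R -> Prop := fun p => I p /\ J p.

Definition generates (s : seq R) (I : R -> Prop) : Prop :=
  forall p, I p <-> exists c : 'I_(size s) -> R, p = \sum_(i < size s) c i * s`_i.

Definition minimal_homog_gens (s : seq R) (I : R -> Prop) : Prop :=
  [/\ all (fun p => p \is homog mdeg) s, generates s I
    & forall i : 'I_(size s), ~ generates (take i s ++ drop i.+1 s) I].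

(* I has a d-linear resolution: there is a graded free resolution
     ... -> F_2 -> F_1 -> F_0 -> I -> 0,   F_i = R(-d-i)^(b i),
   elements of F_i being row vectors of length b i; the augmentation
   F_0 -> I is v |-> v *m g where g has homogeneous entries of degree d, and
   the differentials F_(i+1) -> F_i are v |-> v *m D i, where D i has
   homogeneous entries of degree 1 (so that the maps are graded of degree 0).
   Such a resolution is automatically minimal, and its existence is
   equivalent to the graded minimal free resolution of I being d-linear. *)
Definition has_linear_resolution (d : nat) (I : R -> Prop) : Prop :=
  exists (b : nat -> nat) (g : 'cV[R]_(b 0%N))
         (D : forall i : nat, 'M[R]_(b i.+1, b i)),
  [/\ forall j, g j 0 \is d.-homog,
      forall i j k, D i j k \is 1%N.-homog,
      forall p, I p <-> exists v : 'rV[R]_(b 0%N), p = (v *m g) 0 0,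
      forall v : 'rV[R]_(b 0%N),
        v *m g = 0 <-> exists w : 'rV[R]_(b 1%N), v = w *m D 0%N
    & forall (i : nat) (v : 'rV[R]_(b i.+1)),
        v *m D i = 0 <-> exists w : 'rV[R]_(b i.+2), v = w *m D i.+1].

End Defs.

(* Compare the short exact sequence 0 -> I ∩ J -> I ⊕ J -> I + J -> 0 with the
   given d-linear resolutions F, G, H of I, J, I + J.  The addition map lifts to
   a chain map phi : F ⊕ G -> H whose components are matrices of constants,
   because all differentials are linear.  As I ∩ J is generated in degree d + 1
   it has no nonzero element of degree d, which makes phi_0 injective on
   constant vectors; minimality of the linear resolutions propagates this to
   every phi_i.  Constant matrices injective on constant vectors split, so
   H_i = im phi_i ⊕ C_i with C_i free, and the complex of cokernels C_(i+1),
   augmented by the connecting map C_1 -> H_1 -> H_0 -> F_0 ⊕ G_0 -> I, is a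
   (d + 1)-linear resolution of I ∩ J. *)

From mathcomp Require Import all_boot all_order all_algebra.
From mathcomp Require Import mpoly zify.
From Stdlib Require Import Classical IndefiniteDescription.
Set Implicit Arguments. Unset Strict Implicit. Unset Printing Implicit Defensive.
Import GRing.Theory.
Local Open Scope ring_scope.

Lemma dependent_choice_nat (A : nat -> Type) (P : forall i, A i -> Prop)
    (Rel : forall i, A i -> A i.+1 -> Prop) (x0 : A 0) :
  P 0 x0 -> (forall i x, P i x -> exists y, P i.+1 y /\ Rel i x y) ->
  exists f : forall i, A i,
    [/\ f 0 = x0, forall i, P i (f i) & forall i, Rel i (f i) (f i.+1)].
Proof.
move=> P0 step.
pose next i (x : {x | P i x}) := constructive_indefinite_description _ (step i _ (svalP x)).
pose fix f i : {x | P i x} :=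
  if i is i'.+1 then exist _ (sval (next i' (f i'))) (proj1 (svalP (next i' (f i'))))
  else exist _ x0 P0.
exists (fun i => sval (f i)); split=> // i; first exact: svalP.
exact: (proj2 (svalP (next i (f i)))).
Qed.

Lemma inhabited_forall (I : Type) (A : I -> Type) :
  (forall i, inhabited (A i)) -> inhabited (forall i, A i).
Proof.
move=> hA; constructor=> i.
apply: (proj1_sig (constructive_indefinite_description (fun _ => True) _)).
by case: (hA i) => a; exists a.
Qed.

Section HomogComponents.
Variables (R : ringType) (n : nat).
Local Notation Rn := {mpoly R[n]}.

Lemma pihomog_XmM (q : Rn) e k m : q \is e.-homog ->
  pihomog mdeg k ('X_[m] * q) = if (mdeg m + e == k)%N then 'X_[m] * q else 0.
Proof.
move=> hq; have hX : ('X_[m] : Rn) \is (mdeg m).-homog by rewrite dhomogX.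
have hXq := dhomogM hX hq.
case: eqP => [<-|ne]; first exact: pihomog_dE.
by apply: (pihomog_ne0 _ hXq); apply/eqP.
Qed.

Lemma pihomogMr (p q : Rn) e k : q \is e.-homog ->
  pihomog mdeg k (p * q) = if (e <= k)%N then pihomog mdeg (k - e) p * q else 0.
Proof.
move=> hq.
have -> : p * q = \sum_(m <- msupp p) p@_m *: ('X_[m] * q).
  by rewrite {1}[p]mpolyE big_distrl /=; apply: eq_bigr => m _; rewrite scalerAl.
rewrite linear_sum /=.
under eq_bigr => m _ do rewrite linearZ /= (pihomog_XmM _ _ hq).
case: ifP => hek.
  rewrite pihomogE big_distrl /= [in RHS]big_mkcond /=; apply: eq_bigr => m _.
  have -> : (mdeg m + e == k)%N = (mdeg m == k - e)%N by apply/eqP/eqP; lia.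
  by case: ifP => _; rewrite ?scalerAl ?mul0r ?scaler0.
rewrite big1 // => m _.
have -> : (mdeg m + e == k)%N = false by apply/eqP; lia.
by rewrite scaler0.
Qed.

Lemma dhomog0E (c : Rn) : c \is 0.-homog -> c = (c@_0%MM)%:MP.
Proof.
move=> hc; apply/mpolyP => m; rewrite mcoeffC.
have [->|ne] := eqVneq m 0%MM; first by rewrite mulr1.
by rewrite mulr0; apply: (dhomog_nemf_coeff hc); rewrite /= mdeg_eq0.
Qed.

Lemma dhomogC (c : R) : (c%:MP : Rn) \is 0.-homog.
Proof.
apply/dhomogP => m; rewrite msuppC; case: eqP => // _.
by rewrite inE => /eqP ->; rewrite /= mdeg0.
Qed.

End HomogComponents.

Arguments dhomogC {R n}.

Section Generators.
Variables (K : fieldType) (n : nat).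
Local Notation R := {mpoly K[n]}.

Lemma generates_col N (g : 'cV[R]_N) (P : R -> Prop) :
  (forall p, P p <-> exists v : 'rV[R]_N, p = (v *m g) 0 0) ->
  generates [seq g i 0 | i <- enum 'I_N] P.
Proof.
move=> hP p; rewrite hP size_map size_enum_ord.
have nthE (i : 'I_N) : [seq g i 0 | i <- enum 'I_N]`_i = g i 0.
  by rewrite (nth_map i) ?size_enum_ord // nth_ord_enum.
split=> [[v ->]|[c ->]].
  by exists (fun i => v 0 i); rewrite mxE; apply: eq_bigr => i _; rewrite nthE.
by exists (\row_i c i); rewrite mxE; apply: eq_bigr => i _; rewrite nthE mxE.
Qed.

Lemma minimal_homog_gens_exists (P : R -> Prop) s :
  all (fun p => p \is homog mdeg) s -> generates s P ->
  exists s', minimal_homog_gens s' P.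
Proof.
have [k] := ubnP (size s); elim: k s => // k IH s hs hh hg.
have [[i hi]|hmin] :=
  classic (exists i : 'I_(size s), generates (take i s ++ drop i.+1 s) P).
  apply: (IH _ _ _ hi).
    by rewrite size_cat size_take size_drop ltn_ord; have := ltn_ord i; lia.
  apply/allP => x; rewrite mem_cat => /orP[/mem_take|/mem_drop]; exact: (allP hh).
by exists s; split=> // i hi; apply: hmin; exists i.
Qed.

Lemma generates_dhomog_eq0 (P : R -> Prop) s e k :
  generates s P -> all (fun p => p \is e.-homog) s -> (k < e)%N ->
  forall a, P a -> a \is k.-homog -> a = 0.
Proof.
move=> hg hs lt_ke a /hg[c ->] ha; rewrite -(pihomog_dE ha) linear_sum /= big1 // => i _.
have hi : s`_i \is e.-homog by apply: (allP hs); apply: mem_nth.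
by rewrite (pihomogMr _ _ hi) leqNgt lt_ke.
Qed.

End Generators.

Lemma mulmx_col_mx (R : pzRingType) m p q r
    (x : 'M[R]_(m, p + q)) (a : 'M[R]_(p, r)) (b : 'M[R]_(q, r)) :
  x *m col_mx a b = lsubmx x *m a + rsubmx x *m b.
Proof. by rewrite -{1}[x]hsubmxK mul_row_col. Qed.

Lemma row_cV_mulmx (R : pzRingType) q s (c : 'cV[R]_q) k (v : 'rV[R]_s) (M : 'cV[R]_s) :
  c k 0 = (v *m M) 0 0 -> row k c = v *m M.
Proof. by move=> e; apply/matrixP => i j; rewrite !ord1 mxE. Qed.

Section HomogMatrices.
Variables (R : ringType) (n : nat).
Local Notation Rn := {mpoly R[n]}.

Definition homog_mx e p q (M : 'M[Rn]_(p, q)) := forall i j, M i j \is e.-homog.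

Lemma homog_mxM e f p q r (A : 'M[Rn]_(p, q)) (B : 'M[Rn]_(q, r)) :
  homog_mx e A -> homog_mx f B -> homog_mx (e + f) (A *m B).
Proof. by move=> hA hB i j; rewrite mxE; apply: rpred_sum => k _; apply: dhomogM. Qed.

Lemma homog_mxB e p q (A B : 'M[Rn]_(p, q)) :
  homog_mx e A -> homog_mx e B -> homog_mx e (A - B).
Proof. by move=> hA hB i j; rewrite !mxE; apply: rpredB. Qed.

Lemma homog_mx0 e p q : homog_mx e (0 : 'M[Rn]_(p, q)).
Proof. by move=> i j; rewrite mxE; apply: rpred0. Qed.

Lemma homog_mx1 p : homog_mx 0 (1%:M : 'M[Rn]_p).
Proof. by move=> i j; rewrite mxE; case: eqP => _; [apply: dhomog1 | apply: rpred0]. Qed.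

Lemma homog_mx_col e p1 p2 q (A : 'M[Rn]_(p1, q)) (B : 'M[Rn]_(p2, q)) :
  homog_mx e A -> homog_mx e B -> homog_mx e (col_mx A B).
Proof.
by move=> hA hB i j; rewrite -[i]splitK; case: (split i) => k /=;
  rewrite ?col_mxEu ?col_mxEd.
Qed.

Lemma homog_mx_block e p1 p2 q1 q2 (A : 'M[Rn]_(p1, q1)) (B : 'M[Rn]_(p1, q2))
    (C : 'M[Rn]_(p2, q1)) (D : 'M[Rn]_(p2, q2)) :
  homog_mx e A -> homog_mx e B -> homog_mx e C -> homog_mx e D ->
  homog_mx e (block_mx A B C D).
Proof.
move=> hA hB hC hD; apply: homog_mx_col => i j; rewrite -[j]splitK;
  by case: (split j) => k /=; rewrite ?row_mxEl ?row_mxEr.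
Qed.

Lemma homog_mx_pihomog e p q (A : 'M[Rn]_(p, q)) :
  homog_mx e A -> map_mx (pihomog mdeg e) A = A.
Proof. by move=> hA; apply/matrixP => i j; rewrite mxE pihomog_dE. Qed.

Lemma pihomog_mxMr e p q s (v : 'M[Rn]_(p, q)) (g : 'M[Rn]_(q, s)) :
  homog_mx e g -> map_mx (pihomog mdeg e) (v *m g) = map_mx (pihomog mdeg 0) v *m g.
Proof.
move=> hg; apply/matrixP => i j; rewrite !mxE linear_sum /=; apply: eq_bigr => k _.
by rewrite (pihomogMr _ _ (hg k j)) leqnn subnn mxE.
Qed.

Lemma pihomog_mxMr_lt e k p q s (v : 'M[Rn]_(p, q)) (g : 'M[Rn]_(q, s)) :
  homog_mx e g -> (k < e)%N -> map_mx (pihomog mdeg k) (v *m g) = 0.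
Proof.
move=> hg hk; apply/matrixP => i j; rewrite !mxE linear_sum /=; apply: big1 => l _.
by rewrite (pihomogMr _ _ (hg l j)) leqNgt hk.
Qed.

(* Taking degree-0 parts of the coefficients replaces an arbitrary factorisation
   through g by a constant one. *)
Lemma homog_mx_factor_const e p q s (N : 'M[Rn]_(p, s)) (g : 'M[Rn]_(q, s)) :
  homog_mx e g -> homog_mx e N -> (forall r, exists v : 'rV[Rn]_q, row r N = v *m g) ->
  exists C : 'M[Rn]_(p, q), homog_mx 0 C /\ N = C *m g.
Proof.
move=> hg hN hrow.
have hrowb r : exists v : 'rV[Rn]_q, row r N == v *m g.
  by have [v hv] := hrow r; exists v; apply/eqP.
exists (\matrix_(r < p) map_mx (pihomog mdeg 0) (xchoose (hrowb r))); split.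
  by move=> i j; rewrite !mxE; apply: pihomogP.
apply/row_matrixP => r; rewrite row_mul rowK -(pihomog_mxMr _ hg).
by rewrite -(eqP (xchooseP (hrowb r))) homog_mx_pihomog // => i j; rewrite mxE.
Qed.

Lemma const_mx_linear_factor_eq0 p q s (C : 'M[Rn]_(p, s)) (W : 'M[Rn]_(p, q))
    (D : 'M[Rn]_(q, s)) :
  homog_mx 0 C -> homog_mx 1 D -> C = W *m D -> C = 0.
Proof.
by move=> hC hD eC; rewrite -(homog_mx_pihomog hC) eC; apply: pihomog_mxMr_lt hD _.
Qed.

Lemma const_mx_ker_eq0 p q s t (C : 'M[Rn]_(p, q)) (g : 'M[Rn]_(q, s)) (D : 'M[Rn]_(t, q)) :
  homog_mx 0 C -> homog_mx 1 D ->
  (forall x : 'rV_q, x *m g = 0 -> exists w, x = w *m D) ->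
  C *m g = 0 -> C = 0.
Proof.
move=> hC hD hker eC; apply/row_matrixP => r; rewrite row0.
have [w hw] : exists w, row r C = w *m D by apply: hker; rewrite -row_mul eC row0.
by apply: (const_mx_linear_factor_eq0 _ hD hw) => i j; rewrite mxE.
Qed.

End HomogMatrices.

Arguments homog_mx0 {R n e p q}.
Arguments homog_mx1 {R n p}.

Lemma row_free_split (F : fieldType) p q (phi : 'M[F]_(p, q)) : row_free phi ->
  exists m (T : 'M_(q, p)) (Q : 'M_(q, m)) (S : 'M_(m, q)),
    [/\ phi *m T = 1%:M, phi *m Q = 0, S *m Q = 1%:M & T *m phi + Q *m S = 1%:M].
Proof.
move=> free_phi; set S := row_base (phi^C)%MS; set B := col_mx phi S.
have rkB : \rank B = q.
  rewrite /B -addsmxE /S (adds_eqmx (eqmx_refl phi) (eq_row_base _)).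
  by apply/eqP; apply: addsmx_compl_full.
have /row_freeP[P BP] : row_free B.
  rewrite /row_free rkB mxrank_compl (eqP free_phi).
  by have := rank_leq_col phi; rewrite (eqP free_phi) => /subnKC ->.
have /row_fullP[P' P'B] : row_full B by rewrite /row_full rkB.
have eP : P' = P by rewrite -[P']mulmx1 -BP mulmxA P'B mul1mx.
rewrite {}eP in P'B; exists (\rank (phi^C)%MS), (lsubmx P), (rsubmx P), S.
move: BP P'B; rewrite -[P]hsubmxK /B mul_col_row mul_row_col scalar_mx_block.
by rewrite row_mxKl row_mxKr => /eq_block_mx[-> -> _ ->] ->.
Qed.

Section ConstSplit.
Variables (K : fieldType) (n : nat).
Local Notation R := {mpoly K[n]}.
Local Notation C := (map_mx (@mpolyC n K)).

(* A splitting R^q = im phi (+) R^m by constant matrices: [split_retr] retracts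
   onto the image of phi, [split_coker] is the projection onto the cokernel and
   [split_sect] a section of it. *)
Record const_split p q (phi : 'M[R]_(p, q)) := ConstSplit {
  split_dim : nat;
  split_retr : 'M[R]_(q, p);
  split_coker : 'M[R]_(q, split_dim);
  split_sect : 'M[R]_(split_dim, q);
  split_coker_const : homog_mx 0 split_coker;
  split_sect_const : homog_mx 0 split_sect;
  split_retrK : phi *m split_retr = 1%:M;
  split_cokerK : phi *m split_coker = 0;
  split_sectK : split_sect *m split_coker = 1%:M;
  split_decomp : split_retr *m phi + split_coker *m split_sect = 1%:M }.

Lemma const_split_inj p q (phi : 'M[R]_(p, q)) (s : const_split phi) m (z : 'M[R]_(m, p)) :
  z *m phi = 0 -> z = 0.
Proof. by move=> hz; rewrite -[z]mulmx1 -(split_retrK s) mulmxA hz mul0mx. Qed.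

Lemma const_mxE p q (M : 'M[R]_(p, q)) : homog_mx 0 M -> M = C (map_mx (mcoeff 0%MM) M).
Proof. by move=> hM; apply/matrixP => i j; rewrite !mxE {1}(dhomog0E (hM i j)). Qed.

Lemma homog_mxC p q (M : 'M[K]_(p, q)) : homog_mx 0 (C M).
Proof. by move=> i j; rewrite mxE; apply: dhomogC. Qed.

Lemma const_split_exists p q (phi : 'M[R]_(p, q)) : homog_mx 0 phi ->
  (forall x : 'rV[R]_p, homog_mx 0 x -> x *m phi = 0 -> x = 0) ->
  inhabited (const_split phi).
Proof.
move=> phi_const phi_inj; set phiK := map_mx (mcoeff 0%MM) phi.
have ephi : phi = C phiK by apply: const_mxE.
have : row_free phiK.
  rewrite -kermx_eq0; apply/eqP/row_matrixP => i; rewrite row0.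
  have /phi_inj : C (row i (kermx phiK)) *m phi = 0.
    by rewrite ephi -map_mxM -row_mul mulmx_ker row0 map_mx0.
  move=> /(_ (homog_mxC _)) /matrixP kerC; apply/matrixP => j k.
  by have := congr1 (mcoeff 0%MM) (kerC j k); rewrite !mxE mpolyCK mcoeff0.
move=> /row_free_split[m [T [Q [S [phiT phiQ SQ dec]]]]].
constructor; apply: (@ConstSplit _ _ _ m (C T) (C Q) (C S)); try exact: homog_mxC;
  by rewrite ?ephi -!map_mxM ?phiT ?phiQ ?SQ -?map_mxD ?dec ?map_mx1 ?map_mx0.
Qed.

End ConstSplit.

Arguments split_coker_const {K n p q phi} c.
Arguments split_sect_const {K n p q phi} c.

Section LinearResolutions.
Variables (K : fieldType) (n : nat).
Local Notation R := {mpoly K[n]}.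

Record linres (d : nat) (I : R -> Prop) := LinRes {
  lr_rank : nat -> nat;
  lr_gens : 'cV[R]_(lr_rank 0);
  lr_diff : forall i, 'M[R]_(lr_rank i.+1, lr_rank i);
  lr_gens_homog : homog_mx d lr_gens;
  lr_diff_homog : forall i, homog_mx 1 (lr_diff i);
  lr_span : forall p, I p <-> exists v : 'rV_(lr_rank 0), p = (v *m lr_gens) 0 0;
  lr_exact0 : forall v : 'rV_(lr_rank 0),
    v *m lr_gens = 0 <-> exists w : 'rV_(lr_rank 1), v = w *m lr_diff 0;
  lr_exactS : forall i (v : 'rV_(lr_rank i.+1)),
    v *m lr_diff i = 0 <-> exists w : 'rV_(lr_rank i.+2), v = w *m lr_diff i.+1 }.

Lemma linresP d I : has_linear_resolution d I <-> inhabited (linres d I).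
Proof.
split=> [[b [g [D [hg hD span ex0 exS]]]]|[[b g D hg hD span ex0 exS]]].
  by constructor; apply: (LinRes _ _ span ex0 exS) => [i j|]; rewrite ?ord1.
by exists b, g, D; split=> // j; apply: hg.
Qed.

End LinearResolutions.

Arguments lr_gens_homog {K n d I} l.
Arguments lr_diff_homog {K n d I} l i.
Arguments lr_exact0 {K n d I} l v.
Arguments lr_exactS {K n d I} l {i} v.

Section LinearResolutionTheory.
Variables (K : fieldType) (n d : nat) (I : {mpoly K[n]} -> Prop) (F : linres d I).

Lemma lr_diff0_gens : lr_diff F 0 *m lr_gens F = 0.
Proof.
apply/row_matrixP => i; rewrite row0 row_mul rowE.
by apply/(lr_exact0 F); exists (delta_mx 0 i).
Qed.

Lemma lr_diffSS i : lr_diff F i.+1 *m lr_diff F i = 0.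
Proof.
apply/row_matrixP => j; rewrite row0 row_mul rowE.
by apply/(lr_exactS F); exists (delta_mx 0 j).
Qed.

Lemma lr_mem0 : I 0.
Proof. by apply/(lr_span F); exists 0; rewrite mul0mx mxE. Qed.

Lemma lr_mem_gens k : I (lr_gens F k 0).
Proof. by apply/(lr_span F); exists (delta_mx 0 k); rewrite -rowE mxE. Qed.

Lemma lr_const_gens_eq0 p (C : 'M_(p, lr_rank F 0)) :
  homog_mx 0 C -> C *m lr_gens F = 0 -> C = 0.
Proof.
move=> hC; apply: (const_mx_ker_eq0 hC (lr_diff_homog F 0%N)).
by move=> x /(lr_exact0 F).
Qed.

End LinearResolutionTheory.

Arguments lr_mem_gens {K n d I} F k.
Arguments lr_const_gens_eq0 {K n d I} F {p C}.

Section Intersection.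
Variables (K : fieldType) (n d : nat) (I J : {mpoly K[n]} -> Prop).
Local Notation R := {mpoly K[n]}.
Variables (F : linres d I) (G : linres d J) (H : linres d (ideal_sum I J)).

Local Notation bF := (lr_rank F).
Local Notation gF := (lr_gens F).
Local Notation DF := (lr_diff F).
Local Notation bG := (lr_rank G).
Local Notation gG := (lr_gens G).
Local Notation DG := (lr_diff G).
Local Notation bH := (lr_rank H).
Local Notation gH := (lr_gens H).
Local Notation DH := (lr_diff H).

Definition bFG i := (bF i + bG i)%N.
Definition DFG i : 'M[R]_(bFG i.+1, bFG i) := block_mx (DF i) 0 0 (DG i).
Definition addFG : 'cV[R]_(bFG 0) := col_mx gF gG.
Definition fstFG : 'cV[R]_(bFG 0) := col_mx gF 0.

Lemma DFG_homog i : homog_mx 1 (DFG i).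
Proof.
by apply: homog_mx_block;
  [exact: lr_diff_homog F i | exact: homog_mx0 | exact: homog_mx0 | exact: lr_diff_homog G i].
Qed.

Lemma addFG_homog : homog_mx d addFG.
Proof. by apply: homog_mx_col; [apply: lr_gens_homog F | apply: lr_gens_homog G]. Qed.

Lemma fstFG_homog : homog_mx d fstFG.
Proof. by apply: homog_mx_col; [apply: lr_gens_homog F | apply: homog_mx0]. Qed.

Lemma DFG0_addFG : DFG 0 *m addFG = 0.
Proof.
by rewrite mul_block_col !mul0mx addr0 add0r !lr_diff0_gens col_mx0.
Qed.

Lemma DFG0_fstFG : DFG 0 *m fstFG = 0.
Proof. by rewrite mul_block_col !mul0mx !mulmx0 !addr0 lr_diff0_gens col_mx0. Qed.

Lemma DFGSS i : DFG i.+1 *m DFG i = 0.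
Proof.
by rewrite mulmx_block !mulmx0 !mul0mx !addr0 !add0r !lr_diffSS block_mx0.
Qed.

Lemma DFG_exact0 (x : 'rV[R]_(bFG 0)) : lsubmx x *m gF = 0 -> rsubmx x *m gG = 0 ->
  exists z, x = z *m DFG 0.
Proof.
move=> /(lr_exact0 F)[zF eF] /(lr_exact0 G)[zG eG]; exists (row_mx zF zG).
by rewrite mul_row_block !mulmx0 addr0 add0r -eF -eG hsubmxK.
Qed.

Lemma DFG_exactS i (x : 'rV[R]_(bFG i.+1)) : x *m DFG i = 0 -> exists z, x = z *m DFG i.+1.
Proof.
rewrite -[x]hsubmxK mul_row_block !mulmx0 addr0 add0r -row_mx0.
move=> /eq_row_mx[/(lr_exactS F)[zF ->] /(lr_exactS G)[zG ->]].
by exists (row_mx zF zG); rewrite mul_row_block !mulmx0 addr0 add0r.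
Qed.

Lemma cap_char p : ideal_cap I J p <->
  exists x : 'rV[R]_(bFG 0), x *m addFG = 0 /\ p = (x *m fstFG) 0 0.
Proof.
split=> [[/(lr_span F)[vF eF] /(lr_span G)[vG eG]]|[x [hx ->]]].
  exists (row_mx vF (- vG)); split; last by rewrite mul_row_col mulmx0 addr0.
  rewrite mul_row_col mulNmx; apply/eqP; rewrite subr_eq0; apply/eqP.
  by apply/matrixP => i j; rewrite !ord1 -eF -eG.
rewrite mulmx_col_mx mulmx0 addr0; split; first by apply/(lr_span F); exists (lsubmx x).
apply/(lr_span G); exists (- rsubmx x).
by move: hx; rewrite mulmx_col_mx => /eqP; rewrite addr_eq0 mulNmx => /eqP ->.
Qed.

Lemma addFG_row_span k : exists v : 'rV[R]_(bH 0), row k addFG = v *m gH.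
Proof.
have : ideal_sum I J (addFG k 0).
  rewrite -[k]splitK; case: (split k) => k' /=.
    by exists (gF k' 0), 0; rewrite col_mxEu addr0; split=> //;
      [exact: lr_mem_gens F k' | exact: lr_mem0 G].
  by exists 0, (gG k' 0); rewrite col_mxEd add0r; split=> //;
    [exact: lr_mem0 F | exact: lr_mem_gens G k'].
by move/(lr_span H)=> [v hv]; exists v; apply: row_cV_mulmx.
Qed.

Definition extendable i (M : 'M[R]_(bFG i, bH i)) :=
  homog_mx 0 M /\ forall w : 'rV_(bFG i.+1), exists y, w *m DFG i *m M = y *m DH i.

Lemma lift0_exists : exists M, extendable M /\ M *m gH = addFG.
Proof.
have [C [hC e]] :=
  homog_mx_factor_const (lr_gens_homog H) addFG_homog addFG_row_span.
exists C; split=> //; split=> // w; apply/(lr_exact0 H).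
by rewrite -mulmxA -e -mulmxA DFG0_addFG mulmx0.
Qed.

Lemma lift_succ i (M : 'M[R]_(bFG i, bH i)) : extendable M ->
  exists N, extendable N /\ DFG i *m M = N *m DH i.
Proof.
move=> [hM hw].
have hDM : homog_mx 1 (DFG i *m M) := homog_mxM (@DFG_homog i) hM.
have rows r : exists v : 'rV[R]_(bH i.+1), row r (DFG i *m M) = v *m DH i.
  by have [y hy] := hw (delta_mx 0 r); exists y; rewrite rowE mulmxA hy.
have [N [hN e]] := homog_mx_factor_const (lr_diff_homog H i) hDM rows.
exists N; split=> //; split=> // w; apply/(lr_exactS H).
by rewrite -mulmxA -e mulmxA -(mulmxA w) DFGSS mulmx0 mul0mx.
Qed.

Lemma chain_lift_exists : exists phi : forall i, 'M[R]_(bFG i, bH i),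
  [/\ forall i, homog_mx 0 (phi i), phi 0 *m gH = addFG
    & forall i, DFG i *m phi i = phi i.+1 *m DH i].
Proof.
have [phi0 [lift0 phi0E]] := lift0_exists.
have [phi [phi_0 lift_phi chain]] := dependent_choice_nat
  (Rel := fun i (M : 'M[R]_(bFG i, bH i)) N => DFG i *m M = N *m DH i) lift0 lift_succ.
by exists phi; split; [move=> i; case: (lift_phi i) | rewrite phi_0 |].
Qed.

Lemma sigma_exists : exists sigma : 'M[R]_(bH 0, bFG 0),
  homog_mx 0 sigma /\ gH = sigma *m addFG.
Proof.
apply: (homog_mx_factor_const addFG_homog (lr_gens_homog H)) => k.
have [a [b [/(lr_span F)[vF ea] /(lr_span G)[vG eb] e]]] := lr_mem_gens H k.
by exists (row_mx vF vG); apply: row_cV_mulmx; rewrite mul_row_col mxE e ea eb.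
Qed.

Section Comparison.
Variables (phi : forall i, 'M[R]_(bFG i, bH i)) (sigma : 'M[R]_(bH 0, bFG 0)).
Hypotheses (phi_const : forall i, homog_mx 0 (phi i)) (phi0_gens : phi 0 *m gH = addFG)
  (phi_chain : forall i, DFG i *m phi i = phi i.+1 *m DH i)
  (sigma_const : homog_mx 0 sigma) (sigma_gens : gH = sigma *m addFG).

Lemma sigma_phi0 : sigma *m phi 0 = 1%:M.
Proof.
apply/eqP; rewrite -subr_eq0; apply/eqP; apply: (lr_const_gens_eq0 H).
  exact: homog_mxB (homog_mxM sigma_const (@phi_const 0)) homog_mx1.
by rewrite mulmxBl mul1mx -mulmxA phi0_gens -sigma_gens subrr.
Qed.

(* A kernel vector x of addFG splits as x (1 - phi_0 sigma) + y DH_0 sigma,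
   where x phi_0 = y DH_0. *)
Definition cap_gens : 'cV[R]_(bFG 0 + bH 1) :=
  col_mx ((1%:M - phi 0 *m sigma) *m fstFG) (DH 0 *m sigma *m fstFG).

Lemma cap_gensP p :
  ideal_cap I J p <-> exists v : 'rV_(bFG 0 + bH 1), p = (v *m cap_gens) 0 0.
Proof.
rewrite cap_char; split=> [[x [hx ->]]|[v ->]].
  have /(lr_exact0 H)[y hy] : x *m phi 0 *m gH = 0 by rewrite -mulmxA phi0_gens.
  exists (row_mx x y); rewrite mul_row_col !mulmxA -hy mulmxBr mulmx1.
  by rewrite mulmxBl -!mulmxA subrK.
exists (lsubmx v *m (1%:M - phi 0 *m sigma) + rsubmx v *m DH 0 *m sigma); split.
  rewrite -phi0_gens mulmxA mulmxDl mulmxBr mulmx1 mulmxBl -!mulmxA sigma_phi0.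
  by rewrite !mulmx1 subrr add0r -mulmxA lr_diff0_gens mulmx0.
by rewrite mulmx_col_mx [in RHS]mulmxDl !mulmxA.
Qed.

Lemma cap_gens_homog i : cap_gens i 0 \is homog mdeg.
Proof.
rewrite -[i]splitK; case: (split i) => k /=; [rewrite col_mxEu | rewrite col_mxEd].
  apply/homogE/homog_mxM; last exact: fstFG_homog.
  exact: homog_mxB homog_mx1 (homog_mxM (@phi_const 0) sigma_const).
apply/homogE/homog_mxM; last exact: fstFG_homog.
exact: homog_mxM (lr_diff_homog H 0%N) sigma_const.
Qed.

Hypothesis gens_cap_deg : forall s,
  minimal_homog_gens s (ideal_cap I J) -> all (fun p => p \is d.+1.-homog) s.

Lemma cap_dhomog_eq0 a : I a -> J a -> a \is d.-homog -> a = 0.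
Proof.
move=> aI aJ.
have homog_gens :
    all (fun p => p \is homog mdeg) [seq cap_gens i 0 | i <- enum 'I_(bFG 0 + bH 1)].
  by apply/allP => _ /mapP[i _ ->]; apply: cap_gens_homog.
have [s smin] := minimal_homog_gens_exists homog_gens (generates_col cap_gensP).
have [_ sgen _] := smin.
exact: generates_dhomog_eq0 sgen (gens_cap_deg smin) (ltnSn d) a (conj aI aJ).
Qed.

Lemma phi0_const_inj (x : 'rV[R]_(bFG 0)) : homog_mx 0 x -> x *m phi 0 = 0 -> x = 0.
Proof.
move=> hx hphi.
have hadd : x *m addFG = 0 by rewrite -phi0_gens mulmxA hphi mul0mx.
have hfst : x *m fstFG = 0.
  apply/matrixP => i j; rewrite !ord1 [RHS]mxE.
  have [hI hJ] := (cap_char ((x *m fstFG) 0 0)).2 (ex_intro _ x (conj hadd erefl)).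
  exact: cap_dhomog_eq0 hI hJ (homog_mxM hx fstFG_homog 0 0).
have hl : lsubmx x = 0.
  apply: (lr_const_gens_eq0 F); first by move=> i j; rewrite mxE.
  by move: hfst; rewrite mulmx_col_mx mulmx0 addr0.
have hr : rsubmx x = 0.
  apply: (lr_const_gens_eq0 G); first by move=> i j; rewrite mxE.
  by move: hadd; rewrite mulmx_col_mx hl mul0mx add0r.
by rewrite -[x]hsubmxK hl hr row_mx0.
Qed.

Lemma phi0_sigma : phi 0 *m sigma = 1%:M.
Proof.
apply/eqP; rewrite -subr_eq0; apply/eqP; apply/row_matrixP => r; rewrite row0.
apply: phi0_const_inj.
  move=> i j; rewrite mxE.
  exact: homog_mxB (homog_mxM (@phi_const 0) sigma_const) homog_mx1 r j.
by rewrite -row_mul mulmxBl mul1mx -mulmxA sigma_phi0 mulmx1 subrr row0.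
Qed.

Lemma phi_const_inj_succ i : (forall z : 'rV[R]_(bFG i), z *m phi i = 0 -> z = 0) ->
  forall x : 'rV[R]_(bFG i.+1), homog_mx 0 x -> x *m phi i.+1 = 0 -> x = 0.
Proof.
move=> phi_inj x hx hphi.
apply: (const_mx_ker_eq0 hx (@DFG_homog i.+1) (@DFG_exactS i)).
by apply: phi_inj; rewrite -mulmxA phi_chain mulmxA hphi mul0mx.
Qed.

Lemma phi_split i : inhabited (const_split (phi i)).
Proof.
elim: i => [|i [s]]; apply: const_split_exists (@phi_const _) _.
  exact: phi0_const_inj.
by apply: phi_const_inj_succ => z; exact: (const_split_inj s).
Qed.

Section CapResolution.
Variable spl : forall i, const_split (phi i).
Local Notation T i := (split_retr (spl i)).
Local Notation Q i := (split_coker (spl i)).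
Local Notation S i := (split_sect (spl i)).

Lemma coker_decomp i : Q i *m S i = 1%:M - T i *m phi i.
Proof. by rewrite -(split_decomp (spl i)) addrC addKr. Qed.

Lemma diff_coker i : DH i *m Q i = Q i.+1 *m S i.+1 *m DH i *m Q i.
Proof.
rewrite -[LHS]mul1mx -(split_decomp (spl i.+1)) !mulmxDl -!mulmxA.
by rewrite (mulmxA (phi i.+1)) -phi_chain -(mulmxA (DFG i)) split_cokerK !mulmx0 add0r.
Qed.

Lemma diff_coker_diff i :
  DH i.+1 *m (Q i.+1 *m S i.+1) *m DH i = - (DH i.+1 *m T i.+1 *m (DFG i *m phi i)).
Proof.
by rewrite coker_decomp mulmxBr mulmx1 mulmxBl lr_diffSS sub0r phi_chain !mulmxA.
Qed.

Definition cap_rank j := split_dim (spl j.+1).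
Definition cap_aug : 'cV[R]_(cap_rank 0) := S 1 *m DH 0 *m sigma *m fstFG.
Definition cap_diff j : 'M[R]_(cap_rank j.+1, cap_rank j) := S j.+2 *m DH j.+1 *m Q j.+1.

Lemma cap_diff0_aug : cap_diff 0 *m cap_aug = 0.
Proof.
rewrite /cap_diff /cap_aug !mulmxA.
have -> : S 2 *m DH 1 *m Q 1 *m S 1 *m DH 0 = S 2 *m (DH 1 *m (Q 1 *m S 1) *m DH 0).
  by rewrite !mulmxA.
rewrite diff_coker_diff mulmxN !mulNmx -!mulmxA (mulmxA (phi 0)) phi0_sigma mul1mx.
by rewrite DFG0_fstFG !mulmx0 oppr0.
Qed.

Lemma cap_diffSS i : cap_diff i.+1 *m cap_diff i = 0.
Proof.
rewrite /cap_diff !mulmxA.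
have -> : S i.+3 *m DH i.+2 *m Q i.+2 *m S i.+2 *m DH i.+1 =
    S i.+3 *m (DH i.+2 *m (Q i.+2 *m S i.+2) *m DH i.+1).
  by rewrite !mulmxA.
by rewrite diff_coker_diff mulmxN !mulNmx -!mulmxA split_cokerK !mulmx0 oppr0.
Qed.

Lemma cap_aug_homog : homog_mx d.+1 cap_aug.
Proof.
have hS := homog_mxM (split_sect_const (spl 1)) (lr_diff_homog H 0%N).
exact: homog_mxM (homog_mxM hS sigma_const) fstFG_homog.
Qed.

Lemma cap_diff_homog i : homog_mx 1 (cap_diff i).
Proof.
have hS := homog_mxM (split_sect_const (spl i.+2)) (lr_diff_homog H i.+1).
exact: homog_mxM hS (split_coker_const (spl i.+1)).
Qed.

Lemma cap_span p :
  ideal_cap I J p <-> exists v : 'rV[R]_(cap_rank 0), p = (v *m cap_aug) 0 0.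
Proof.
rewrite cap_char; split=> [[x [hx ->]]|[v ->]].
  have /(lr_exact0 H)[y hy] : x *m phi 0 *m gH = 0 by rewrite -mulmxA phi0_gens.
  have ex : x = y *m DH 0 *m sigma by rewrite -hy -mulmxA phi0_sigma mulmx1.
  exists (y *m Q 1).
  rewrite ex /cap_aug !mulmxA -(mulmxA y (Q 1)) -[in LHS](mulmx1 y) -(split_decomp (spl 1)).
  rewrite mulmxDr !mulmxDl !mulmxA.
  have -> : y *m T 1 *m phi 1 *m DH 0 *m sigma *m fstFG = 0.
    rewrite -(mulmxA _ (phi 1)) -phi_chain -!mulmxA (mulmxA (phi 0)) phi0_sigma mul1mx.
    by rewrite DFG0_fstFG !mulmx0.
  by rewrite add0r.
exists (v *m S 1 *m DH 0 *m sigma); split; last by rewrite /cap_aug !mulmxA.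
by rewrite -phi0_gens -!mulmxA (mulmxA sigma) sigma_phi0 mul1mx lr_diff0_gens !mulmx0.
Qed.

Lemma cap_exact0 (v : 'rV[R]_(cap_rank 0)) :
  v *m cap_aug = 0 <-> exists w : 'rV[R]_(cap_rank 1), v = w *m cap_diff 0.
Proof.
split=> [hv|[w ->]]; last by rewrite -mulmxA cap_diff0_aug mulmx0.
set x := v *m S 1 *m DH 0 *m sigma.
have hfst : x *m fstFG = 0 by rewrite /x -hv /cap_aug !mulmxA.
have hphi : x *m phi 0 = v *m S 1 *m DH 0 by rewrite /x -mulmxA sigma_phi0 mulmx1.
have hadd : x *m addFG = 0 by rewrite -phi0_gens mulmxA hphi -!mulmxA lr_diff0_gens !mulmx0.
have hl : lsubmx x *m gF = 0 by move: hfst; rewrite mulmx_col_mx mulmx0 addr0.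
have hr : rsubmx x *m gG = 0 by move: hadd; rewrite mulmx_col_mx hl add0r.
have [z hz] := DFG_exact0 hl hr.
have /(lr_exactS H)[w hw] : (v *m S 1 - z *m phi 1) *m DH 0 = 0.
  by rewrite mulmxBl -hphi hz -mulmxA phi_chain mulmxA subrr.
have ev : v = w *m DH 1 *m Q 1.
  by rewrite -hw mulmxBl -!mulmxA split_cokerK split_sectK mulmx1 mulmx0 subr0.
by exists (w *m Q 2); rewrite ev /cap_diff -(mulmxA w) diff_coker !mulmxA.
Qed.

Lemma cap_exactS i (v : 'rV[R]_(cap_rank i.+1)) :
  v *m cap_diff i = 0 <-> exists w : 'rV[R]_(cap_rank i.+2), v = w *m cap_diff i.+1.
Proof.
split=> [hv|[w ->]]; last by rewrite -mulmxA cap_diffSS mulmx0.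
set y := v *m S i.+2 *m DH i.+1.
have hyQ : y *m Q i.+1 = 0 by rewrite /y -hv /cap_diff !mulmxA.
have ey : y = y *m T i.+1 *m phi i.+1.
  rewrite -[in LHS](mulmx1 y) -(split_decomp (spl i.+1)).
  by rewrite mulmxDr !mulmxA hyQ mul0mx addr0.
have /DFG_exactS[z hz] : y *m T i.+1 *m DFG i = 0.
  apply: (const_split_inj (spl i)).
  by rewrite -mulmxA phi_chain mulmxA -ey /y -!mulmxA lr_diffSS !mulmx0.
have /(lr_exactS H)[w hw] : (v *m S i.+2 - z *m phi i.+2) *m DH i.+1 = 0.
  by rewrite mulmxBl -/y -mulmxA -phi_chain mulmxA -hz -ey subrr.
have ev : v = w *m DH i.+2 *m Q i.+2.
  by rewrite -hw mulmxBl -!mulmxA split_cokerK split_sectK mulmx1 mulmx0 subr0.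
by exists (w *m Q i.+3); rewrite ev /cap_diff -(mulmxA w) diff_coker !mulmxA.
Qed.

Definition cap_linres : linres d.+1 (ideal_cap I J) :=
  LinRes cap_aug_homog cap_diff_homog cap_span cap_exact0 cap_exactS.

End CapResolution.

End Comparison.

End Intersection.

Theorem lemma3p12 (K : fieldType) (n d : nat) (I J : {mpoly K[n]} -> Prop) :
  is_graded_ideal I -> is_graded_ideal J ->
  has_linear_resolution d I -> has_linear_resolution d J ->
  has_linear_resolution d (ideal_sum I J) ->
  (forall s : seq {mpoly K[n]}, minimal_homog_gens s (ideal_cap I J) ->
     all (fun p => p \is d.+1.-homog) s) ->
  has_linear_resolution d.+1 (ideal_cap I J).
Proof.
move=> _ _ /linresP[F] /linresP[G] /linresP[H] gens_cap_deg; apply/linresP.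
have [phi [phi_const phi0_gens phi_chain]] := chain_lift_exists F G H.
have [sigma [sigma_const sigma_gens]] := sigma_exists F G H.
have [spl] := inhabited_forall
  (phi_split phi_const phi0_gens phi_chain sigma_const sigma_gens gens_cap_deg).
by constructor; exact: cap_linres spl.
Qed.
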